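(* Fix $\gamma>0$ and a realisation of the training data. Let $\mathcal A_n$ be any maximal subset of $[n]$ such that the vectors $(\|1_{\mathcal X}\|_{\mathcal H}^2,1,\ldots,1)^\top\in\mathbb R^{n+1}$ and $(1,k(X_i,X_1),\ldots,k(X_i,X_n))^\top\in\mathbb R^{n+1}$, $i\in\mathcal A_n$, are linearly independent. Let $\bar k(y)=\frac1n\sum_{i=1}^nk(X_i,y)$, $\tilde k(x,y)=k(x,y)-\bar k(y)$, and for $\beta\in\mathbb R^{\mathcal A_n}$ let $f_\beta(x)=\sum_{i\in\mathcal A_n}\tilde k(x,X_i)\beta_i$. Then $\beta\mapsto\ell_{n,\gamma}(f_\beta)$ is strongly convex on $\mathbb R^{\mathcal A_n}$, and writing $\hat\beta$ for its unique minimiser, $f_{\hat\beta}$ is the unique minimiser of $f\mapsto\ell_{n,\gamma}(f)$ over $f\in\mathcal H$.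
   Context: Let $\mathcal X$ be a locally compact metric space in which every open set is $\sigma$-compact. Let $k:\mathcal X\times\mathcal X\to\mathbb R$ be a continuous, symmetric, positive semidefinite kernel with RKHS $\mathcal H$, and assume $k-\delta$ is positive semidefinite for some $\delta>0$, so the constant function $1_{\mathcal X}\in\mathcal H$. Data: points $X_1,\ldots,X_n\in\mathcal X$, times $T_i\in(0,\infty)$, indicators $I_i\in\{0,1\}$. Define $N_i(t)=\mathbb 1\{T_i\le t,\ I_i=0\}$, $R_i(t)=\mathbb 1\{T_i\ge t\}$, $S_n(f,t)=\frac1n\sum_{i=1}^nR_i(t)e^{f(X_i)}$, $P_n(f)=\frac1n\sum_{i=1}^nf(X_i)$, $\ell_n(f)=\frac1n\sum_{i=1}^n N_i(1)\log S_n(f,T_i)-\frac1n\sum_{i=1}^n f(X_i)N_i(1)$, and for $\gamma>0$ the penalised objective $\ell_{n,\gamma}(f)=\ell_n(f)+\gamma\|f-P_n(f)1_{\mathcal X}\|_{\mathcal H}^2+\gamma P_n(f)^2$ for $f\in\mathcal H$. *)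

From HB Require Import structures.
From mathcomp Require Import all_boot all_order all_algebra.
From mathcomp Require Import all_classical all_reals all_analysis.
Set Implicit Arguments. Unset Strict Implicit. Unset Printing Implicit Defensive.
Import Order.TTheory GRing.Theory Num.Theory.
Import numFieldNormedType.Exports.
Local Open Scope classical_set_scope.
Local Open Scope ring_scope.

Definition open_sets_sigma_compact (T : topologicalType) : Prop :=
  forall U : set T, open U ->
    exists K : nat -> set T, (forall m, compact (K m)) /\ U = \bigcup_m K m.

Definition psd_kernel (R : realType) (X : Type) (k : X -> X -> R) : Prop :=
  forall (m : nat) (x : 'I_m -> X) (c : 'I_m -> R),
    0 <= \sum_(i < m) \sum_(j < m) c i * c j * k (x i) (x j).

Definition symmetric_kernel (R : realType) (X : Type) (k : X -> X -> R) : Prop :=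
  forall x y, k x y = k y x.

(* H (a set of real functions on X) with inner product ip is the reproducing
   kernel Hilbert space of k: a real inner-product space of functions, complete
   for the induced norm, containing the sections k(.,x), with the reproducing
   property <f, k(.,x)> = f x.  (The RKHS is unique, so quantifying over all
   such (H, ip) is the same as speaking of "the" RKHS of k.) *)
Record is_RKHS (R : realType) (X : Type) (k : X -> X -> R)
    (H : set (X -> R)) (ip : (X -> R) -> (X -> R) -> R) : Prop := {
  rkhs_zero : H (fun _ => 0);
  rkhs_add : forall f g, H f -> H g -> H (fun x => f x + g x);
  rkhs_scale : forall (a : R) f, H f -> H (fun x => a * f x);
  rkhs_ip_sym : forall f g, H f -> H g -> ip f g = ip g f;
  rkhs_ip_linl : forall (a : R) f g h, H f -> H g -> H h ->
      ip (fun x => a * f x + g x) h = a * ip f h + ip g h;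
  rkhs_ip_pos : forall f, H f -> 0 <= ip f f;
  rkhs_ip_def : forall f, H f -> ip f f = 0 -> f = (fun _ => 0);
  rkhs_complete : forall u : nat -> (X -> R), (forall m, H (u m)) ->
      (forall e : R, 0 < e -> exists N, forall p q, (N <= p)%N -> (N <= q)%N ->
         ip (fun x => u p x - u q x) (fun x => u p x - u q x) < e) ->
      exists f, H f /\ (forall e : R, 0 < e -> exists N, forall p, (N <= p)%N ->
         ip (fun x => u p x - f x) (fun x => u p x - f x) < e);
  rkhs_kmem : forall y, H (fun x => k x y);
  rkhs_reproducing : forall f y, H f -> ip f (fun x => k x y) = f y
}.

Section Cox.
Variables (R : realType) (X : Type) (n : nat) (Xs : 'I_n -> X)
  (T : 'I_n -> R) (I : 'I_n -> bool).
(* I i = true encodes I_i = 1, I i = false encodes I_i = 0. *)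

Definition Ncount (i : 'I_n) (t : R) : R := (((T i <= t)%R && ~~ I i) : nat)%:R.
Definition Rrisk (i : 'I_n) (t : R) : R := (((t <= T i)%R) : nat)%:R.
Definition Sn (f : X -> R) (t : R) : R :=
  n%:R^-1 * \sum_(i < n) Rrisk i t * expR (f (Xs i)).
Definition Pn (f : X -> R) : R := n%:R^-1 * \sum_(i < n) f (Xs i).
Definition ell_n (f : X -> R) : R :=
  n%:R^-1 * \sum_(i < n) Ncount i 1 * ln (Sn f (T i))
  - n%:R^-1 * \sum_(i < n) f (Xs i) * Ncount i 1.
(* penalised objective; ip is the RKHS inner product, ||g||^2 = ip g g *)
Definition ell_pen (ip : (X -> R) -> (X -> R) -> R) (gamma : R) (f : X -> R) : R :=
  ell_n f
  + gamma * ip (fun x => f x - Pn f * 1) (fun x => f x - Pn f * 1)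
  + gamma * Pn f ^+ 2.

Definition kbar (k : X -> X -> R) (y : X) : R := n%:R^-1 * \sum_(i < n) k (Xs i) y.
Definition ktilde (k : X -> X -> R) (x y : X) : R := k x y - kbar k y.

(* Linear independence in R^{n+1} of the family consisting of
   v0 = (||1||^2, 1, ..., 1) and v_i = (1, k(X_i,X_1), ..., k(X_i,X_n)), i in A,
   written coordinatewise: the only vanishing linear combination is trivial. *)
Definition indep_family (k : X -> X -> R) (norm1sq : R) (A : {set 'I_n}) : Prop :=
  forall (c0 : R) (c : 'I_n -> R),
    c0 * norm1sq + \sum_(i in A) c i * 1 = 0 ->
    (forall j : 'I_n, c0 * 1 + \sum_(i in A) c i * k (Xs i) (Xs j) = 0) ->
    c0 = 0 /\ (forall i, i \in A -> c i = 0).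

Definition maximal_indep (k : X -> X -> R) (norm1sq : R) (A : {set 'I_n}) : Prop :=
  indep_family k norm1sq A /\
  (forall B : {set 'I_n}, A \proper B -> ~ indep_family k norm1sq B).

Definition f_beta (k : X -> X -> R) (A : {set 'I_n})
    (beta : {i : 'I_n | i \in A} -> R) : X -> R :=
  fun x => \sum_(i : {i : 'I_n | i \in A}) ktilde k x (Xs (val i)) * beta i.
End Cox.

Definition strongly_convex (R : realType) (I : finType) (F : (I -> R) -> R) : Prop :=
  exists m : R, 0 < m /\
    forall (b1 b2 : I -> R) (t : R), 0 <= t -> t <= 1 ->
      F (fun i => t * b1 i + (1 - t) * b2 i)
      <= t * F b1 + (1 - t) * F b2
         - m / 2 * t * (1 - t) * \sum_i (b1 i - b2 i) ^+ 2.

From HB Require Import structures.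
From mathcomp Require Import all_boot all_order all_algebra.
From mathcomp Require Import all_classical all_reals all_analysis.
From mathcomp Require Import ring lra.
Import Order.TTheory GRing.Theory Num.Theory.
Import numFieldNormedType.Exports.
Local Open Scope classical_set_scope.
Local Open Scope ring_scope.
Set Implicit Arguments. Unset Strict Implicit. Unset Printing Implicit Defensive.

(* Projecting f in H onto the span of 1 and the centred sections
   ktilde(., X_i), i in A_n, leaves a remainder r orthogonal to 1 that vanishes
   at the X_i with i in A_n, and maximality of A_n forces it to vanish at every
   X_j.  So f = f_beta + c + r, and since the partial likelihood only sees the
   values at the data and ignores constants, while the penalty splits as
   ||f_beta||^2 + ||r||^2 + c^2, we get
   ell_{n,gamma}(f) = ell_{n,gamma}(f_beta) + gamma (||r||^2 + c^2).
   On R^{A_n}, beta |-> ell_{n,gamma}(f_beta) is a convex log-sum-exp term plus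
   gamma ||f_beta||^2, a positive definite quadratic form because the
   ktilde(., X_i) are independent; it is thus strongly convex, and being
   continuous and bounded below it has a unique minimiser. *)

Lemma discriminant_le0 (R : realFieldType) (a b c : R) : 0 <= c ->
  (forall t, 0 <= a + 2 * t * b + t ^+ 2 * c) -> b ^+ 2 <= a * c.
Proof.
move=> c0 hq; have [c_eq0|cn0] := eqVneq c 0.
  rewrite c_eq0 mulr0; have [->|bn0] := eqVneq b 0; first by rewrite expr0n.
  have := hq (- (a + 1) / (2 * b)); rewrite c_eq0 mulr0 addr0.
  have -> : 2 * (- (a + 1) / (2 * b)) * b = - (a + 1) by field.
  lra.
have cpos : 0 < c by rewrite lt_neqAle eq_sym cn0.
have := hq (- b / c).
have -> : a + 2 * (- b / c) * b + (- b / c) ^+ 2 * c = a - b ^+ 2 / c by field.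
by rewrite subr_ge0 ler_pdivrMr.
Qed.

Section RKHSAlgebra.
Variables (R : realType) (X : Type) (k : X -> X -> R) (H : set (X -> R))
  (ip : (X -> R) -> (X -> R) -> R).
Hypothesis hH : is_RKHS k H ip.

Lemma rkhs_sub f g : H f -> H g -> H (fun x => f x - g x).
Proof.
move=> hf hg; have := rkhs_add hH hf (rkhs_scale hH (-1) hg).
by under eq_fun do rewrite mulN1r.
Qed.

Lemma rkhs_sum (J : Type) (r : seq J) (P : pred J) (c : J -> R) (g : J -> X -> R) :
  (forall j, H (g j)) -> H (fun x => \sum_(j <- r | P j) c j * g j x).
Proof.
move=> hg; elim: r => [|j r IH].
  by under eq_fun do rewrite big_nil; exact: rkhs_zero hH.
under eq_fun do rewrite big_cons; case: (P j) => //.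
by apply: (rkhs_add hH) IH; apply: (rkhs_scale hH).
Qed.

Lemma ip_addl f g h : H f -> H g -> H h ->
  ip (fun x => f x + g x) h = ip f h + ip g h.
Proof.
move=> hf hg hh; have := rkhs_ip_linl hH 1 hf hg hh.
by under eq_fun do rewrite mul1r; rewrite mul1r.
Qed.

Lemma ip0l h : H h -> ip (fun _ => 0) h = 0.
Proof.
move=> hh; have := ip_addl (rkhs_zero hH) (rkhs_zero hH) hh.
under eq_fun do rewrite addr0.
by move=> E; apply: (addrI (ip (fun _ => 0) h)); rewrite addr0 -E.
Qed.

Lemma ip_scalel (a : R) f h : H f -> H h -> ip (fun x => a * f x) h = a * ip f h.
Proof.
move=> hf hh; have := rkhs_ip_linl hH a hf (rkhs_zero hH) hh.
by under eq_fun do rewrite addr0; rewrite ip0l // addr0.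
Qed.

Lemma ip_subl f g h : H f -> H g -> H h ->
  ip (fun x => f x - g x) h = ip f h - ip g h.
Proof.
move=> hf hg hh; have := rkhs_ip_linl hH (-1) hg hf hh.
by under eq_fun do rewrite mulN1r addrC; rewrite mulN1r addrC.
Qed.

Lemma ip_suml (J : Type) (r : seq J) (P : pred J) (c : J -> R) (g : J -> X -> R) h :
  (forall j, H (g j)) -> H h ->
  ip (fun x => \sum_(j <- r | P j) c j * g j x) h = \sum_(j <- r | P j) c j * ip (g j) h.
Proof.
move=> hg hh; elim: r => [|j r IH].
  by under eq_fun do rewrite big_nil; rewrite big_nil ip0l.
under eq_fun do rewrite big_cons; rewrite big_cons; case: (P j) => //.
by rewrite ip_addl ?ip_scalel ?IH //; [exact: (rkhs_scale hH) | exact: rkhs_sum].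
Qed.

Lemma ip_sumr (J : Type) (r : seq J) (P : pred J) (c : J -> R) (g : J -> X -> R) h :
  (forall j, H (g j)) -> H h ->
  ip h (fun x => \sum_(j <- r | P j) c j * g j x) = \sum_(j <- r | P j) c j * ip h (g j).
Proof.
move=> hg hh; rewrite (rkhs_ip_sym hH hh (rkhs_sum r P c hg)) ip_suml //.
by apply: eq_bigr => j _; rewrite (rkhs_ip_sym hH (hg j)).
Qed.

Lemma ip_sqr_comb (t s : R) f g : H f -> H g ->
  ip (fun x => t * f x + s * g x) (fun x => t * f x + s * g x) =
  t ^+ 2 * ip f f + 2 * t * s * ip f g + s ^+ 2 * ip g g.
Proof.
move=> hf hg; have htf := rkhs_scale hH t hf; have hsg := rkhs_scale hH s hg.
have hc := rkhs_add hH htf hsg.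
rewrite (ip_addl htf hsg hc) (ip_scalel t hf hc) (ip_scalel s hg hc).
rewrite (rkhs_ip_sym hH hf hc) (rkhs_ip_sym hH hg hc) (ip_addl htf hsg hf).
rewrite (ip_addl htf hsg hg) (ip_scalel t hf hf) (ip_scalel s hg hf).
rewrite (ip_scalel t hf hg) (ip_scalel s hg hg) (rkhs_ip_sym hH hg hf); ring.
Qed.

Lemma ip_sqr_convex_comb (t : R) f g : H f -> H g ->
  ip (fun x => t * f x + (1 - t) * g x) (fun x => t * f x + (1 - t) * g x) =
  t * ip f f + (1 - t) * ip g g
  - t * (1 - t) * ip (fun x => f x - g x) (fun x => f x - g x).
Proof.
move=> hf hg; have := ip_sqr_comb 1 (-1) hf hg.
under eq_fun do rewrite mul1r mulN1r; move=> ->; rewrite ip_sqr_comb //; ring.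
Qed.

Lemma ip_cauchy_schwarz f g : H f -> H g -> ip f g ^+ 2 <= ip f f * ip g g.
Proof.
move=> hf hg; apply: discriminant_le0 (rkhs_ip_pos hH hg) _ => t.
have := rkhs_ip_pos hH (rkhs_add hH (rkhs_scale hH 1 hf) (rkhs_scale hH t hg)).
by rewrite ip_sqr_comb // expr1n !mul1r mulr1.
Qed.

End RKHSAlgebra.

Section FiniteSpan.
Variables (R : realType) (X : Type) (k : X -> X -> R) (H : set (X -> R))
  (ip : (X -> R) -> (X -> R) -> R).
Hypothesis hH : is_RKHS k H ip.
Variables (I : finType) (g : I -> X -> R).
Hypothesis g_mem : forall a, H (g a).
Hypothesis g_free :
  forall w : I -> R, (forall x, \sum_a w a * g a x = 0) -> forall a, w a = 0.

Definition lincomb (w : I -> R) : X -> R := fun x => \sum_a w a * g a x.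

Definition gram : 'M[R]_#|I| := \matrix_(a, b) ip (g (enum_val a)) (g (enum_val b)).

Lemma sum_enum_val (F : I -> R) : \sum_(i < #|I|) F (enum_val i) = \sum_a F a.
Proof. by rewrite (big_enum_val (A := I)). Qed.

Lemma gram_mulE (v : 'rV[R]_#|I|) b :
  (v *m gram) 0 b = ip (lincomb (fun a => v 0 (enum_rank a))) (g (enum_val b)).
Proof.
rewrite mxE /lincomb (ip_suml hH) // -sum_enum_val.
by apply: eq_bigr => a _; rewrite enum_valK mxE.
Qed.

Lemma gram_unit : gram \in unitmx.
Proof.
rewrite -row_free_unit; apply/inj_row_free => v v0.
pose w : I -> R := fun a => v 0 (enum_rank a).
have hw : H (lincomb w) by exact: (rkhs_sum hH).
have orth b : ip (lincomb w) (g b) = 0.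
  by rewrite -(enum_rankK b) -gram_mulE v0 mxE.
have w0 : lincomb w = (fun _ => 0).
  apply: (rkhs_ip_def hH hw).
  by rewrite {2}/lincomb (ip_sumr hH) //; apply: big1 => b _; rewrite orth mulr0.
apply/rowP => i; rewrite !mxE -(enum_valK i).
exact: (g_free (fun x => congr1 (fun f => f x) w0) (enum_val i)).
Qed.

Lemma lincomb_orth_proj f : H f ->
  exists w, forall b, ip (lincomb w) (g b) = ip f (g b).
Proof.
move=> hf; pose z : 'rV[R]_#|I| := \row_i ip f (g (enum_val i)).
exists (fun a => (z *m invmx gram) 0 (enum_rank a)) => b.
by rewrite -(enum_rankK b) -gram_mulE mulmxKV ?gram_unit // mxE.
Qed.

(* Writing v = (v *m gram) *m gram^-1 and bounding each entry of v *m gram by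
   Cauchy-Schwarz. *)
Lemma lincomb_coercive : exists C, 0 <= C /\
  forall w, \sum_a w a ^+ 2 <= C * ip (lincomb w) (lincomb w).
Proof.
pose norm_g (i : 'I_#|I|) := Num.sqrt (ip (g (enum_val i)) (g (enum_val i))).
pose c (j : 'I_#|I|) := \sum_i norm_g i * `|invmx gram i j|.
have c0 j : 0 <= c j by apply: sumr_ge0 => i _; rewrite mulr_ge0 ?sqrtr_ge0.
exists (\sum_j c j ^+ 2); split=> [|w]; first by apply: sumr_ge0 => j _; rewrite sqr_ge0.
pose v : 'rV[R]_#|I| := \row_j w (enum_val j).
have wE : (fun a => v 0 (enum_rank a)) = w by apply: funext => a; rewrite mxE enum_rankK.
set Q := ip (lincomb w) (lincomb w).
have hw : H (lincomb w) by exact: (rkhs_sum hH).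
have Q0 : 0 <= Q by exact: (rkhs_ip_pos hH).
have y_le i : `|(v *m gram) 0 i| <= Num.sqrt Q * norm_g i.
  rewrite gram_mulE wE -sqrtr_sqr -sqrtrM //; apply: ler_wsqrtr.
  exact: (ip_cauchy_schwarz hH).
have v_le j : `|v 0 j| <= Num.sqrt Q * c j.
  rewrite -[v](mulmxK gram_unit) mxE (le_trans (ler_norm_sum _ _ _)) // mulr_sumr.
  by apply: ler_sum => i _; rewrite normrM mulrA ler_wpM2r.
rewrite mulr_suml -sum_enum_val; apply: ler_sum => j _.
have -> : w (enum_val j) = v 0 j by rewrite mxE.
rewrite -real_normK ?num_real // mulrC -(sqr_sqrtr Q0) -exprMn.
by rewrite lerXn2r ?nnegrE ?mulr_ge0 ?sqrtr_ge0.
Qed.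

End FiniteSpan.

Lemma expR_convex_comb (R : realType) (u v t : R) : 0 <= t -> t <= 1 ->
  expR (t * u + (1 - t) * v) <= t * expR u + (1 - t) * expR v.
Proof. by move=> t0 t1; have := @convex_expR R (Itv01 t0 t1) u v; rewrite /conv. Qed.

Section LogSumExp.
Variables (R : realType) (J : finType) (a : J -> R).
Hypotheses (a_ge0 : forall j, 0 <= a j) (a_pos : exists j, 0 < a j).

Lemma sum_expR_gt0 (u : J -> R) : 0 < \sum_j a j * expR (u j).
Proof.
have [j aj] := a_pos; rewrite (bigD1 j) //= ltr_pwDl ?mulr_gt0 ?expR_gt0 //.
by apply: sumr_ge0 => l _; rewrite mulr_ge0 ?expR_ge0.
Qed.

(* With E = exp (t ln S_u + (1 - t) ln S_v), convexity of exp bounds each term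
   exp (t u_j + (1 - t) v_j) by E (t exp u_j / S_u + (1 - t) exp v_j / S_v),
   and these bounds sum to E. *)
Lemma ln_sum_expR_convex (u v : J -> R) (t : R) : 0 <= t -> t <= 1 ->
  ln (\sum_j a j * expR (t * u j + (1 - t) * v j))
  <= t * ln (\sum_j a j * expR (u j)) + (1 - t) * ln (\sum_j a j * expR (v j)).
Proof.
move=> t0 t1; set Su := \sum_j _ * expR (u j); set Sv := \sum_j _ * expR (v j).
have [Su0 Sv0] := (sum_expR_gt0 u, sum_expR_gt0 v).
set E := expR (t * ln Su + (1 - t) * ln Sv).
pose bound j := t * expR (u j) / Su + (1 - t) * expR (v j) / Sv.
have term j : expR (t * u j + (1 - t) * v j) <= E * bound j.
  have -> : t * u j + (1 - t) * v j =
      (t * ln Su + (1 - t) * ln Sv) + (t * (u j - ln Su) + (1 - t) * (v j - ln Sv)).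
    by ring.
  rewrite expRD ler_wpM2l ?expR_ge0 //.
  apply: le_trans (expR_convex_comb _ _ t0 t1) _.
  by rewrite !expRD !expRN !lnK ?posrE // !mulrA.
have sum_bound : \sum_j a j * (E * bound j) = E.
  rewrite (eq_bigr (fun j => E * t / Su * (a j * expR (u j)) +
    E * (1 - t) / Sv * (a j * expR (v j)))) => [|j _]; last by rewrite /bound; ring.
  by rewrite big_split /= -!mulr_sumr !divfK ?gt_eqF // -mulrDr addrC subrK mulr1.
rewrite -[X in _ <= X]expRK ler_ln ?posrE ?expR_gt0 ?sum_expR_gt0 // -/E -sum_bound.
by apply: ler_sum => j _; rewrite ler_wpM2l.
Qed.

End LogSumExp.

Lemma cvg_sumr (R : realType) (T : Type) (F : set_system T) (J : Type) (r : seq J)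
    (P : pred J) (u : J -> T -> R) (l : J -> R) : Filter F ->
  (forall j, P j -> u j x @[x --> F] --> l j) ->
  \sum_(j <- r | P j) u j x @[x --> F] --> \sum_(j <- r | P j) l j.
Proof. by move=> FF; apply: cvg_big; exact: add_continuous. Qed.

Section CoxLikelihood.
Variables (R : realType) (X : Type) (n : nat) (Xs : 'I_n -> X) (T : 'I_n -> R)
  (I : 'I_n -> bool).
Hypothesis hn : (0 < n)%N.

Local Notation N i := (Ncount T I i 1).
Local Notation S f i := (Sn Xs T f (T i)).
Local Notation ell := (ell_n Xs T I).

Lemma Sn_sum_expR f t :
  Sn Xs T f t = \sum_l (n%:R^-1 * Rrisk T l t) * expR (f (Xs l)).
Proof. by rewrite /Sn mulr_sumr; under eq_bigr do rewrite mulrA. Qed.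

Lemma risk_weight_ge0 t l : 0 <= n%:R^-1 * Rrisk T l t :> R.
Proof. by rewrite mulr_ge0 ?invr_ge0 ?ler0n. Qed.

Lemma exists_risk_weight_gt0 i : exists l, 0 < n%:R^-1 * Rrisk T l (T i) :> R.
Proof. by exists i; rewrite /Rrisk lexx mulr1 invr_gt0 ltr0n. Qed.

Lemma Sn_gt0 f i : 0 < S f i.
Proof.
rewrite Sn_sum_expR; apply: sum_expR_gt0.
  exact: risk_weight_ge0.
exact: exists_risk_weight_gt0.
Qed.

Lemma ell_nE f : ell f = n%:R^-1 * \sum_i N i * (ln (S f i) - f (Xs i)).
Proof.
rewrite /ell_n -mulrBr -sumrB.
by under eq_bigr do rewrite [f _ * _]mulrC -mulrBr.
Qed.

Lemma ell_n_shift f g c : (forall l, f (Xs l) = g (Xs l) + c) -> ell f = ell g.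
Proof.
move=> fg; have lnS i : ln (S f i) = ln (S g i) + c.
  rewrite Sn_sum_expR (eq_bigr (fun l => expR c * ((n%:R^-1 * Rrisk T l (T i)) *
    expR (g (Xs l))))) => [|l _]; last by rewrite fg expRD; ring.
  by rewrite -mulr_sumr -Sn_sum_expR lnM ?posrE ?expR_gt0 ?Sn_gt0 // expRK addrC.
rewrite !ell_nE; congr (_ * _); apply: eq_bigr => i _.
by rewrite lnS fg opprD addrACA subrr addr0.
Qed.

Lemma ell_n_convex f g h (t : R) : 0 <= t -> t <= 1 ->
  (forall l, h (Xs l) = t * f (Xs l) + (1 - t) * g (Xs l)) ->
  ell h <= t * ell f + (1 - t) * ell g.
Proof.
move=> t0 t1 hfg; rewrite !ell_nE !mulrA !(mulrC _ n%:R^-1) -!mulrA -mulrDr.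
rewrite ler_wpM2l ?invr_ge0 ?ler0n // !mulr_sumr -big_split /=.
apply: ler_sum => i _; rewrite !Sn_sum_expR.
under eq_bigr do rewrite hfg.
have := ln_sum_expR_convex (risk_weight_ge0 (T i)) (exists_risk_weight_gt0 i)
  (fun l => f (Xs l)) (fun l => g (Xs l)) t0 t1.
have N0 : 0 <= N i by rewrite ler0n.
rewrite hfg; nra.
Qed.

Lemma ell_n_bounded_below : exists L, forall f, L <= ell f.
Proof.
exists (n%:R^-1 * \sum_i N i * - ln (n%:R : R)) => f.
rewrite ell_nE ler_wpM2l ?invr_ge0 ?ler0n //; apply: ler_sum => i _.
rewrite ler_wpM2l ?ler0n // lerBrDr.
have Si : n%:R^-1 * expR (f (Xs i)) <= S f i.
  rewrite Sn_sum_expR (bigD1 i) //= /Rrisk lexx mulr1 lerDl.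
  by apply: sumr_ge0 => l _; rewrite mulr_ge0 ?expR_ge0 ?risk_weight_ge0.
move: Si; rewrite -ler_ln ?posrE ?Sn_gt0 ?mulr_gt0 ?expR_gt0 ?invr_gt0 ?ltr0n //.
by rewrite lnM ?posrE ?expR_gt0 ?invr_gt0 ?ltr0n // lnV ?posrE ?ltr0n // expRK.
Qed.

Lemma ell_n_cvg (fs : nat -> X -> R) f :
  (forall l, fs p (Xs l) @[p --> \oo] --> f (Xs l)) ->
  ell (fs p) @[p --> \oo] --> ell f.
Proof.
move=> hfs; rewrite ell_nE; under eq_cvg do rewrite ell_nE.
apply: cvgM; first exact: cvg_cst.
apply: cvg_sumr => i _; apply: cvgM; first exact: cvg_cst.
apply: cvgB => //; apply: (continuous_cvg _ (continuous_ln (Sn_gt0 f i))).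
rewrite Sn_sum_expR; under eq_cvg do rewrite Sn_sum_expR.
apply: cvg_sumr => l _; apply: cvgM; first exact: cvg_cst.
by apply: continuous_cvg; [exact: continuous_expR | exact: hfs].
Qed.

End CoxLikelihood.

Lemma cvgn_sqr_dist_harmonic (R : realType) (u : R ^nat) (C : R) :
  (forall p q, (u p - u q) ^+ 2 <= C * (harmonic p + harmonic q)) -> cvgn u.
Proof.
move=> hu; apply/cauchy_cvgP/cauchy_ballP => e e0; rewrite near_simpl.
set d := e ^+ 2 / (2 * (`|C| + 1)).
have C1 : 0 < `|C| + 1 by rewrite ltr_wpDl.
have hd : \forall p \near \oo, harmonic p < d.
  by apply: cvgr_lt cvg_harmonic _ _; rewrite divr_gt0 ?exprn_gt0 ?mulr_gt0.
exists ([set p | harmonic p < d], [set q | harmonic q < d]); first by split; exact: hd.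
case=> p q [hp hq]; rewrite /ball /= -(@ltr_pXn2r _ 2) ?nnegrE ?(ltW e0) //.
rewrite real_normK ?num_real //; apply: le_lt_trans (hu p q) _.
apply: le_lt_trans (ler_norm _) _; rewrite normrM.
apply: (@le_lt_trans _ _ (`|C| * (2 * d))).
  rewrite ler_wpM2l // ger0_norm ?addr_ge0 ?harmonic_ge0 //.
  by apply: le_trans (lerD (ltW hp) (ltW hq)) _; lra.
have -> : `|C| * (2 * d) = e ^+ 2 * (`|C| / (`|C| + 1)).
  by rewrite /d; field; rewrite gt_eqF.
by rewrite gtr_pMr ?exprn_gt0 // ltr_pdivrMr // mul1r ltrDl.
Qed.

Section StrongConvexity.
Variables (R : realType) (I : finType) (F : (I -> R) -> R).

Lemma strongly_convex_sqr_dist_le (m s : R) :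
  (forall (b1 b2 : I -> R) (t : R), 0 <= t -> t <= 1 ->
     F (fun i => t * b1 i + (1 - t) * b2 i)
     <= t * F b1 + (1 - t) * F b2 - m / 2 * t * (1 - t) * \sum_i (b1 i - b2 i) ^+ 2) ->
  (forall b, s <= F b) ->
  forall b1 b2, m * \sum_i (b1 i - b2 i) ^+ 2 <= 4 * (F b1 + F b2 - 2 * s).
Proof.
move=> hm hs b1 b2; have h0 : 0 <= 1 / 2 :> R by lra.
have h1 : 1 / 2 <= 1 :> R by lra.
have := hm b1 b2 (1 / 2) h0 h1; have := hs (fun i => 1 / 2 * b1 i + (1 - 1 / 2) * b2 i).
lra.
Qed.

Lemma strongly_convex_argmin_unique : strongly_convex F ->
  forall b1 b2, (forall b, F b1 <= F b) -> (forall b, F b2 <= F b) -> b1 = b2.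
Proof.
move=> [m [m0 hm]] b1 b2 min1 min2.
have := strongly_convex_sqr_dist_le hm min1 b1 b2.
have e : F b2 = F b1 by apply/eqP; rewrite eq_le min1 min2.
have -> : F b1 + F b2 - 2 * F b1 = 0 by rewrite e; lra.
rewrite mulr0 pmulr_rle0 // => d_le0.
have d0 : \sum_j (b1 j - b2 j) ^+ 2 = 0.
  by apply/eqP; rewrite eq_le d_le0 sumr_ge0 // => j _; exact: sqr_ge0.
apply/funext => i; apply/eqP; rewrite -subr_eq0 -sqrf_eq0; apply/eqP.
by apply: (psumr_eq0P _ d0) => // j _; exact: sqr_ge0.
Qed.

Lemma strongly_convex_argmin_exists : strongly_convex F ->
  (exists L, forall b, L <= F b) ->
  (forall (bs : nat -> I -> R) b,
     (forall i, bs p i @[p --> \oo] --> b i) -> F (bs p) @[p --> \oo] --> F b) ->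
  exists b, forall b', F b <= F b'.
Proof.
move=> [m [m0 hm]] [L hL] F_cvg.
have hinf : has_inf (range F).
  by split; [exists (F (fun _ => 0)), (fun _ => 0) | exists L => _ [b _ <-]].
set s := inf (range F); have s_le b : s <= F b by apply: (ge_inf hinf.2); exists b.
have near_inf p : exists b, F b <= s + harmonic p.
  by have [_ [b _ <-] /ltW] := inf_adherent (harmonic_gt0 p) hinf; exists b.
have [bs hbs] := choice near_inf.
have bs_cvg i : cvgn (bs ^~ i).
  apply: (@cvgn_sqr_dist_harmonic _ _ (4 / m)) => p q.
  apply: le_trans (_ : \sum_j (bs p j - bs q j) ^+ 2 <= _).
    by rewrite (bigD1 i) //= lerDl sumr_ge0 // => j _; rewrite sqr_ge0.
  rewrite -(ler_pM2l m0) [m * (_ * _)]mulrA [m * _]mulrC divfK ?gt_eqF //.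
  apply: le_trans (strongly_convex_sqr_dist_le hm s_le (bs p) (bs q)) _.
  have := hbs p; have := hbs q; lra.
exists (fun i => limn (bs ^~ i)) => b; apply: le_trans (s_le b).
apply: (ler_cvg_to (F_cvg _ _ bs_cvg)).
  by rewrite -[s]addr0; exact: cvgD (cvg_cst _) cvg_harmonic.
exact: nearW.
Qed.

End StrongConvexity.

Lemma sum_option (V : nmodType) (J : finType) (F : option J -> V) :
  \sum_(a : option J) F a = F None + \sum_(j : J) F (Some j).
Proof.
rewrite (bigD1 None) //=; congr (_ + _).
rewrite (reindex_omap Some id) => [|[j|] //].
by apply: eq_bigl => j; rewrite eqxx.
Qed.

Section PenalisedCox.
Variables (R : realType) (X : Type) (k : X -> X -> R) (H : set (X -> R))
  (ip : (X -> R) -> (X -> R) -> R).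
Hypotheses (hH : is_RKHS k H ip) (ksym : symmetric_kernel k) (h1 : H (fun _ => 1)).
Variables (n : nat) (Xs : 'I_n -> X).

Local Notation one := (fun _ : X => 1 : R).

Lemma mem_kernel_sum (B : {set 'I_n}) (c : 'I_n -> R) :
  H (fun x => \sum_(i in B) c i * k x (Xs i)).
Proof. by apply: (rkhs_sum hH) => i; exact: (rkhs_kmem hH). Qed.

Lemma mem_kernel_comb (B : {set 'I_n}) (c0 : R) (c : 'I_n -> R) :
  H (fun x => c0 * 1 + \sum_(i in B) c i * k x (Xs i)).
Proof. exact: (rkhs_add hH (rkhs_scale hH c0 h1) (mem_kernel_sum B c)). Qed.

Lemma ip_kernel_comb (B : {set 'I_n}) (c0 : R) (c : 'I_n -> R) h : H h ->
  ip (fun x => c0 * 1 + \sum_(i in B) c i * k x (Xs i)) h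
  = c0 * ip one h + \sum_(i in B) c i * h (Xs i).
Proof.
move=> hh; rewrite (ip_addl hH (rkhs_scale hH c0 h1) (mem_kernel_sum B c) hh).
rewrite (ip_scalel hH c0 h1 hh) (ip_suml hH _ _ _ (fun i => rkhs_kmem hH (Xs i)) hh).
congr (_ + _); apply: eq_bigr => i _.
by rewrite (rkhs_ip_sym hH (rkhs_kmem hH _) hh) (rkhs_reproducing hH).
Qed.

Lemma kernel_comb_eq0P (B : {set 'I_n}) (c0 : R) (c : 'I_n -> R) :
  (forall x, c0 * 1 + \sum_(i in B) c i * k x (Xs i) = 0) <->
  c0 * ip one one + \sum_(i in B) c i * 1 = 0 /\
  (forall j, c0 * 1 + \sum_(i in B) c i * k (Xs i) (Xs j) = 0).
Proof.
pose u x := c0 * 1 + \sum_(i in B) c i * k x (Xs i).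
have hu : H u := mem_kernel_comb B c0 c.
have u_data j : u (Xs j) = c0 * 1 + \sum_(i in B) c i * k (Xs i) (Xs j).
  by rewrite /u; under eq_bigr do rewrite ksym.
have ip_u_one : ip u one = c0 * ip one one + \sum_(i in B) c i * 1.
  exact: ip_kernel_comb.
split=> [u0 | [u_one u_X] x].
  have uE : u = (fun _ => 0) by apply: funext.
  by split=> [|j]; [rewrite -ip_u_one uE (ip0l hH h1) | rewrite -u_data uE].
change (u x = 0); suff -> : u = (fun _ => 0) by [].
apply: (rkhs_ip_def hH hu); rewrite {1}/u ip_kernel_comb //.
rewrite (rkhs_ip_sym hH h1 hu) ip_u_one u_one mulr0 add0r.
by apply: big1 => i _; rewrite u_data u_X mulr0.
Qed.

(* The coordinatewise condition of the statement is linear independence of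
   1 and the sections k(., X_i), i in B, inside H. *)
Lemma indep_familyE (B : {set 'I_n}) :
  indep_family Xs k (ip one one) B <->
  (forall c0 c, (forall x, c0 * 1 + \sum_(i in B) c i * k x (Xs i) = 0) ->
     c0 = 0 /\ forall i, i \in B -> c i = 0).
Proof.
split=> hind c0 c.
  by move/kernel_comb_eq0P => [e1 e2]; exact: hind.
by move=> e1 e2; apply: hind; apply/kernel_comb_eq0P.
Qed.

Variable A : {set 'I_n}.
Hypothesis hA : maximal_indep Xs k (ip one one) A.

(* If r (X_j) <> 0 for some j outside A, pairing a vanishing combination over
   j |: A with r kills its j-th coefficient, so j |: A would still be
   independent. *)
Lemma vanishing_on_maximal_set r : H r -> ip one r = 0 ->
  (forall i, i \in A -> r (Xs i) = 0) -> forall j, r (Xs j) = 0.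
Proof.
move=> hr r1 rA j; case jA: (j \in A); first exact: rA.
apply: contrapT => rj; case: hA => /indep_familyE indA maxA.
apply: (maxA (j |: A)); first by apply: properUr; rewrite finset.sub1set jA.
apply/indep_familyE => c0 c hc.
have cj : c j = 0.
  have := ip_kernel_comb (j |: A) c0 c hr.
  rewrite r1 mulr0 add0r big_setU1 ?jA //= big1 ?addr0 => [|i /rA ->]; last first.
    by rewrite mulr0.
  have -> : (fun x => c0 * 1 + \sum_(i in j |: A) c i * k x (Xs i)) = (fun _ => 0).
    by apply: funext.
  rewrite (ip0l hH hr) => /esym/eqP; rewrite mulf_eq0.
  by case/orP => /eqP // /rj.
have [-> cA] : c0 = 0 /\ forall i, i \in A -> c i = 0.
  by apply: indA => x; rewrite -[RHS](hc x) big_setU1 ?jA //= cj mul0r add0r.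
by split=> // i; rewrite in_setU1 => /orP[/eqP -> | /cA].
Qed.

Lemma mem_ktilde i : H (fun x => ktilde Xs k x (Xs i)).
Proof.
have := rkhs_sub hH (rkhs_kmem hH (Xs i)) (rkhs_scale hH (kbar Xs k (Xs i)) h1).
by under eq_fun do rewrite mulr1.
Qed.

Lemma ip_ktilde_l i h : H h ->
  ip (fun x => ktilde Xs k x (Xs i)) h = h (Xs i) - kbar Xs k (Xs i) * ip one h.
Proof.
move=> hh; have -> : (fun x => ktilde Xs k x (Xs i)) =
    (fun x => k x (Xs i) - kbar Xs k (Xs i) * 1) by apply: funext => x; rewrite mulr1.
rewrite (ip_subl hH (rkhs_kmem hH _) (rkhs_scale hH _ h1) hh) (ip_scalel hH _ h1 hh).
by rewrite (rkhs_ip_sym hH (rkhs_kmem hH _) hh) (rkhs_reproducing hH).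
Qed.

Local Notation J := {i : 'I_n | i \in A}.
Local Notation fb := (f_beta Xs k).

Lemma f_betaE (b : J -> R) : fb b = (fun x => \sum_j b j * ktilde Xs k x (Xs (val j))).
Proof. by apply: funext => x; apply: eq_bigr => j _; rewrite mulrC. Qed.

Lemma mem_f_beta (b : J -> R) : H (fb b).
Proof. by rewrite f_betaE; apply: (rkhs_sum hH) => j; exact: mem_ktilde. Qed.

Lemma ip_f_beta_l (b : J -> R) h : H h -> ip (fb b) h =
  \sum_j b j * (h (Xs (val j)) - kbar Xs k (Xs (val j)) * ip one h).
Proof.
move=> hh; rewrite f_betaE (ip_suml hH _ _ _ (fun j => mem_ktilde (val j)) hh).
by apply: eq_bigr => j _; rewrite ip_ktilde_l.
Qed.

Definition span_basis (a : option J) : X -> R :=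
  if a is Some j then (fun x => ktilde Xs k x (Xs (val j))) else one.

Lemma mem_span_basis a : H (span_basis a).
Proof. by case: a => [j|] //; exact: mem_ktilde. Qed.

Lemma lincomb_span_basis w :
  lincomb span_basis w = (fun x => w None + fb (fun j => w (Some j)) x).
Proof. by rewrite f_betaE; apply: funext => x; rewrite /lincomb sum_option mulr1. Qed.

Definition extend (b : J -> R) (i : 'I_n) : R := if insub i is Some j then b j else 0.

Lemma sum_extend (b : J -> R) (F : 'I_n -> R) :
  \sum_(i in A) extend b i * F i = \sum_j b j * F (val j).
Proof. by rewrite (big_sub A); apply: eq_bigr => j _; rewrite /extend valK. Qed.

Lemma span_basis_free w :
  (forall x, \sum_a w a * span_basis a x = 0) -> forall a, w a = 0.
Proof.
move=> hw; pose c := extend (fun j => w (Some j)).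
pose c0 := w None - \sum_(i in A) c i * kbar Xs k (Xs i).
have hc x : c0 * 1 + \sum_(i in A) c i * k x (Xs i) = 0.
  rewrite -[RHS](hw x) sum_option /= mulr1 -(sum_extend _ (fun i => ktilde Xs k x (Xs i))).
  rewrite /c0 /ktilde; under [in RHS]eq_bigr do rewrite mulrBr.
  rewrite sumrB; ring.
have [c00 cA] := (indep_familyE A).1 hA.1 c0 c hc.
have wS j : w (Some j) = 0 by have := cA _ (valP j); rewrite /c /extend valK.
case=> [j|] //; move: c00; rewrite /c0 big1 ?subr0 // => i iA.
by rewrite cA ?mul0r.
Qed.

Lemma f_beta_decomposition f : H f -> exists (b : J -> R) c r,
  [/\ H r, ip one r = 0, (forall j, r (Xs j) = 0) & f = (fun x => fb b x + c + r x)].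
Proof.
move=> hf; have [w hw] := lincomb_orth_proj hH mem_span_basis span_basis_free hf.
have hw_mem : H (lincomb span_basis w) by exact: (rkhs_sum hH _ _ _ mem_span_basis).
pose r x := f x - lincomb span_basis w x.
have hr : H r := rkhs_sub hH hf hw_mem.
have r_orth a : ip (span_basis a) r = 0.
  rewrite (rkhs_ip_sym hH (mem_span_basis a) hr).
  by rewrite (ip_subl hH hf hw_mem (mem_span_basis a)) hw subrr.
have r1 : ip one r = 0 := r_orth None.
exists (fun j => w (Some j)), (w None), r; split => //.
  apply: vanishing_on_maximal_set => // i iA.
  by have := r_orth (Some (exist _ i iA)); rewrite /= ip_ktilde_l // r1 mulr0 subr0.
by apply: funext => x; rewrite /r lincomb_span_basis; ring.
Qed.

Variables (T : 'I_n -> R) (I : 'I_n -> bool) (gamma : R).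
Hypotheses (hn : (0 < n)%N) (hgamma : 0 < gamma).

Local Notation ell_pen := (ell_pen Xs T I ip gamma).

Let n_neq0 : n%:R != 0 :> R.
Proof. by rewrite pnatr_eq0 -lt0n. Qed.

Lemma sum_ktilde y : \sum_l ktilde Xs k (Xs l) y = 0.
Proof. by rewrite /ktilde sumrB sumr_const card_ord /kbar; field. Qed.

Lemma Pn_f_beta (b : J -> R) : Pn Xs (fb b) = 0.
Proof.
rewrite /Pn f_betaE /= exchange_big big1 ?mulr0 // => j _.
by rewrite -mulr_sumr sum_ktilde mulr0.
Qed.

Lemma ell_pen_f_beta (b : J -> R) :
  ell_pen (fb b) = ell_n Xs T I (fb b) + gamma * ip (fb b) (fb b).
Proof.
rewrite /ell_pen Pn_f_beta expr0n /= mulr0 addr0.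
by under eq_fun do rewrite mul0r subr0.
Qed.

Lemma ell_pen_decomp (b : J -> R) c r :
  H r -> ip one r = 0 -> (forall j, r (Xs j) = 0) ->
  ell_pen (fun x => fb b x + c + r x) = ell_pen (fb b) + gamma * (ip r r + c ^+ 2).
Proof.
move=> hr r1 rX; set g := fun x => _.
have gX l : g (Xs l) = fb b (Xs l) + c by rewrite /g rX addr0.
have Pg : Pn Xs g = c.
  have := Pn_f_beta b; rewrite /Pn (eq_bigr _ (fun l _ => gX l)) big_split /= => P0.
  by rewrite mulrDr P0 add0r sumr_const card_ord; field.
have fb_r : ip (fb b) r = 0.
  by rewrite ip_f_beta_l // big1 // => j _; rewrite rX r1 mulr0 subr0 mulr0.
rewrite ell_pen_f_beta /ell_pen (ell_n_shift T I hn gX) Pg.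
have -> : (fun x => g x - c * 1) = (fun x => 1 * fb b x + 1 * r x).
  by apply: funext => x; rewrite /g; ring.
by rewrite (ip_sqr_comb hH 1 1 (mem_f_beta b) hr) fb_r; ring.
Qed.

Lemma f_beta_convex_comb (b1 b2 : J -> R) t :
  fb (fun j => t * b1 j + (1 - t) * b2 j) = (fun x => t * fb b1 x + (1 - t) * fb b2 x).
Proof.
rewrite !f_betaE; apply: funext => x; rewrite !mulr_sumr -big_split.
by apply: eq_bigr => j _ /=; ring.
Qed.

Lemma f_beta_sub (b1 b2 : J -> R) :
  fb (fun j => b1 j - b2 j) = (fun x => fb b1 x - fb b2 x).
Proof.
by rewrite !f_betaE; apply: funext => x; rewrite -sumrB; apply: eq_bigr => j _; ring.
Qed.

Lemma f_beta_coercive : exists C, 0 < C /\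
  forall b : J -> R, \sum_j b j ^+ 2 <= C * ip (fb b) (fb b).
Proof.
have [C [C0 hC]] := lincomb_coercive hH mem_span_basis span_basis_free.
exists (C + 1); split=> [|b]; first lra.
pose w (a : option J) := if a is Some j then b j else 0.
have := hC w; rewrite sum_option expr0n add0r lincomb_span_basis /w.
have -> : (fun x => 0 + fb (fun j => b j) x) = fb b by apply: funext => x; rewrite add0r.
move=> /le_trans; apply.
by rewrite ler_wpM2r ?lerDl // (rkhs_ip_pos hH (mem_f_beta b)).
Qed.

Lemma ell_pen_f_beta_strongly_convex :
  strongly_convex (fun b : J -> R => ell_pen (fb b)).
Proof.
have [C [C0 hC]] := f_beta_coercive.
exists (2 * gamma / C); split=> [|b1 b2 t t0 t1]; first by rewrite divr_gt0 ?mulr_gt0.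
have [hf1 hf2] := (mem_f_beta b1, mem_f_beta b2).
rewrite !ell_pen_f_beta f_beta_convex_comb (ip_sqr_convex_comb hH t hf1 hf2).
have := @ell_n_convex _ _ _ Xs T I hn (fb b1) (fb b2)
  (fun x => t * fb b1 x + (1 - t) * fb b2 x) t t0 t1 (fun l => erefl).
have := hC (fun j => b1 j - b2 j); rewrite f_beta_sub.
set d := \sum_j _; set Q := ip _ _ => dQ.
have : gamma * (t * (1 - t)) * (d / C) <= gamma * (t * (1 - t)) * Q.
  by rewrite ler_wpM2l ?mulr_ge0 ?subr_ge0 ?(ltW hgamma) // ler_pdivrMr // mulrC.
have -> : 2 * gamma / C / 2 * t * (1 - t) * d = gamma * (t * (1 - t)) * (d / C).
  by field; rewrite gt_eqF.
lra.
Qed.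

Lemma ell_pen_f_beta_bounded_below : exists L, forall b : J -> R, L <= ell_pen (fb b).
Proof.
have [L hL] := ell_n_bounded_below Xs T I hn; exists L => b.
rewrite ell_pen_f_beta; apply: le_trans (hL (fb b)) _.
by rewrite lerDl mulr_ge0 ?(ltW hgamma) // (rkhs_ip_pos hH (mem_f_beta b)).
Qed.

Lemma ell_pen_f_beta_cvg (bs : nat -> J -> R) (b : J -> R) :
  (forall j, bs p j @[p --> \oo] --> b j) ->
  ell_pen (fb (bs p)) @[p --> \oo] --> ell_pen (fb b).
Proof.
move=> hb; have fb_cvg x : fb (bs p) x @[p --> \oo] --> fb b x.
  by apply: cvg_sumr => j _; apply: cvgM => //; exact: cvg_cst.
have ipE (b' : J -> R) : ip (fb b') (fb b') =
    \sum_j b' j * (fb b' (Xs (val j)) - kbar Xs k (Xs (val j)) *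
      \sum_i b' i * (1 - kbar Xs k (Xs (val i)) * ip one one)).
  rewrite ip_f_beta_l; last exact: mem_f_beta.
  by rewrite (rkhs_ip_sym hH h1 (mem_f_beta b')) ip_f_beta_l.
under eq_cvg do rewrite ell_pen_f_beta ipE; rewrite ell_pen_f_beta ipE.
apply: cvgD; first exact: ell_n_cvg.
apply: cvgM; first exact: cvg_cst.
apply: cvg_sumr => j _; apply: cvgM => //; apply: cvgB => //.
apply: cvgM; first exact: cvg_cst.
by apply: cvg_sumr => i _; apply: cvgM => //; exact: cvg_cst.
Qed.

Lemma f_beta_argmin_ell_pen (b0 : J -> R) :
  (forall b : J -> R, ell_pen (fb b0) <= ell_pen (fb b)) ->
  forall f, H f -> ell_pen (fb b0) <= ell_pen f.
Proof.
move=> b0_min f hf; have [b [c [r [hr r1 rX ->]]]] := f_beta_decomposition hf.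
rewrite ell_pen_decomp //; apply: le_trans (b0_min b) _.
by rewrite lerDl mulr_ge0 ?addr_ge0 ?sqr_ge0 ?(ltW hgamma) ?(rkhs_ip_pos hH hr).
Qed.

Lemma ell_pen_argmin_unique (b0 : J -> R) :
  (forall b : J -> R, ell_pen (fb b0) <= ell_pen (fb b)) ->
  forall g, H g -> (forall f, H f -> ell_pen g <= ell_pen f) -> g = fb b0.
Proof.
move=> b0_min g hg g_min; have [b [c [r [hr r1 rX gE]]]] := f_beta_decomposition hg.
have := g_min _ (mem_f_beta b0); have := b0_min b.
rewrite gE ell_pen_decomp // => b0_le g_le.
have pen_ge0 : 0 <= gamma * (ip r r + c ^+ 2).
  by rewrite mulr_ge0 ?addr_ge0 ?sqr_ge0 ?(ltW hgamma) ?(rkhs_ip_pos hH hr).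
have b_min (b' : J -> R) : ell_pen (fb b) <= ell_pen (fb b').
  by apply: le_trans (b0_min b'); lra.
have /eqP : gamma * (ip r r + c ^+ 2) = 0 by apply/eqP; rewrite eq_le pen_ge0 andbT; lra.
rewrite mulf_eq0 gt_eqF //= paddr_eq0 ?sqr_ge0 ?(rkhs_ip_pos hH hr) // sqrf_eq0.
case/andP => /eqP /(rkhs_ip_def hH hr) -> /eqP c0.
rewrite c0 (strongly_convex_argmin_unique ell_pen_f_beta_strongly_convex b_min b0_min).
by apply: funext => x; rewrite !addr0.
Qed.

End PenalisedCox.

Theorem proposition1 (R : realType) (X : pseudoMetricType R)
  (hX : hausdorff_space X) (lcX : locally_compact [set: X])
  (sX : open_sets_sigma_compact X)
  (k : X -> X -> R)
  (kcont : continuous (fun p : X * X => k p.1 p.2))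
  (ksym : symmetric_kernel k) (kpsd : psd_kernel k)
  (delta : R) (hdelta : 0 < delta)
  (kdpsd : psd_kernel (fun x y => k x y - delta))
  (H : set (X -> R)) (ip : (X -> R) -> (X -> R) -> R)
  (hH : is_RKHS k H ip) (h1 : H (fun _ => 1))
  (n : nat) (hn : (0 < n)%N)
  (Xs : 'I_n -> X) (T : 'I_n -> R) (hT : forall i, 0 < T i) (I : 'I_n -> bool)
  (gamma : R) (hgamma : 0 < gamma)
  (A : {set 'I_n})
  (hA : maximal_indep Xs k (ip (fun _ => 1) (fun _ => 1)) A) :
  let F := fun beta : {i : 'I_n | i \in A} -> R =>
             ell_pen Xs T I ip gamma (f_beta Xs k beta) in
  strongly_convex F /\
  exists betahat : {i : 'I_n | i \in A} -> R,
    (forall beta, F betahat <= F beta) /\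
    (forall beta', (forall beta, F beta' <= F beta) -> beta' = betahat) /\
    H (f_beta Xs k betahat) /\
    (forall f, H f -> ell_pen Xs T I ip gamma (f_beta Xs k betahat)
                      <= ell_pen Xs T I ip gamma f) /\
    (forall g, H g -> (forall f, H f -> ell_pen Xs T I ip gamma g
                                         <= ell_pen Xs T I ip gamma f) ->
       g = f_beta Xs k betahat).
Proof.
move=> F.
have F_sc : strongly_convex F := ell_pen_f_beta_strongly_convex hH ksym h1 hA T I hn hgamma.
have [bh bh_min] := strongly_convex_argmin_exists F_sc
  (ell_pen_f_beta_bounded_below hH h1 Xs A T I hn hgamma)
  (ell_pen_f_beta_cvg hH h1 hn).
split=> //; exists bh; split=> //; split.
  by move=> b' b'_min; exact: (strongly_convex_argmin_unique F_sc b'_min bh_min).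
split; first exact: (mem_f_beta hH h1 Xs bh).
split; first exact: (f_beta_argmin_ell_pen hH ksym h1 hA hn hgamma bh_min).
exact: (ell_pen_argmin_unique hH ksym h1 hA hn hgamma bh_min).
Qed.
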